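(* Let $\mathcal{A}$ be a unital algebra over a field $F$ with $\operatorname{char}(F)\neq2$ and let $f\in\operatorname{QJDer}(\mathcal{A})$. Then $f\in\operatorname{JCent}(\mathcal{A})+\operatorname{JDer}(\mathcal{A})$ if and only if $f(1)\in Z_J(\mathcal{A})$.
   Context: $x\circ y=xy+yx$, $[x,y]=xy-yx$. $\operatorname{QJDer}(\mathcal{A})$: linear $f:\mathcal{A}\to\mathcal{A}$ for which there is a linear $h$ with $f(x)\circ y+x\circ f(y)=h(x\circ y)$ for all $x,y$. $\operatorname{JCent}(\mathcal{A})$: linear $f$ with $f(x\circ y)=f(x)\circ y$ for all $x,y$. $\operatorname{JDer}(\mathcal{A})$: linear $d$ with $d(x\circ y)=d(x)\circ y+x\circ d(y)$ for all $x,y$. $Z_J(\mathcal{A})=\{a: [[a,x],y]=0\ \forall x,y\in\mathcal{A}\}$. Sums of sets of maps are sets of pointwise sums. *)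

From HB Require Import structures.
From mathcomp Require Import all_boot all_order all_algebra.
Set Implicit Arguments. Unset Strict Implicit. Unset Printing Implicit Defensive.
Import GRing.Theory.
Local Open Scope ring_scope.

Section Jordan.
Variables (F : fieldType) (A : algType F).

Definition jprod (x y : A) : A := x * y + y * x.
Definition comm (x y : A) : A := x * y - y * x.

Definition is_lin (f : A -> A) : Prop :=
  forall (a : F) (x y : A), f (a *: x + y) = a *: f x + f y.

Definition QJDer (f : A -> A) : Prop :=
  is_lin f /\ exists h : A -> A, is_lin h /\
    forall x y, jprod (f x) y + jprod x (f y) = h (jprod x y).

Definition JCent (f : A -> A) : Prop :=
  is_lin f /\ forall x y, f (jprod x y) = jprod (f x) y.

Definition JDer (d : A -> A) : Prop :=
  is_lin d /\ forall x y, d (jprod x y) = jprod (d x) y + jprod x (d y).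

Definition ZJ (a : A) : Prop := forall x y, comm (comm a x) y = 0.

Definition in_JCent_plus_JDer (f : A -> A) : Prop :=
  exists g d : A -> A, JCent g /\ JDer d /\ forall x, f x = g x + d x.

End Jordan.

(* For a in A write L_a for the map z |-> a o z.  Expanding both sides gives
   a o (x o y) - (a o x) o y = [[a, y], x], so a lies in Z_J(A) exactly when
   L_a belongs to the Jordan centroid.  A Jordan derivation kills 1 and a
   centroid element g satisfies g = L_(g 1) / 2, whence f(1) = g(1) lies in
   Z_J(A) whenever f = g + d.  Conversely, evaluating the defining identity of
   f at x = 1 shows that its companion map is h = f + L_(f 1) / 2, and then
   f - L_(f 1) / 2 is a Jordan derivation. *)

From HB Require Import structures.
From mathcomp Require Import all_boot all_order all_algebra.
Import GRing.Theory.

Set Implicit Arguments.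
Unset Strict Implicit.
Local Open Scope ring_scope.

Section HalfScaling.
Variables (F : fieldType) (V : lmodType F).
Hypothesis two_neq0 : (2%:R : F) != 0.

Lemma mulr2n_inj (u v : V) : u *+ 2 = v *+ 2 -> u = v.
Proof.
move=> uv; rewrite -[u]scale1r -[v]scale1r -(mulVf two_neq0) -!scalerA.
by rewrite !scaler_nat uv.
Qed.

Lemma scale_half_mulr2n (v : V) : ((2%:R : F)^-1 *: v) *+ 2 = v.
Proof. by rewrite -scaler_nat scalerA mulfV // scale1r. Qed.

End HalfScaling.

Section JordanProduct.
Variables (F : fieldType) (A : algType F).
Implicit Types (a x y z : A) (f g h d : A -> A).

Lemma jprodC x y : jprod x y = jprod y x.
Proof. by rewrite /jprod addrC. Qed.

Lemma jprod1l y : jprod 1 y = y *+ 2.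
Proof. by rewrite /jprod mul1r mulr1 mulr2n. Qed.

Lemma jprodDl x y z : jprod (x + y) z = jprod x z + jprod y z.
Proof. by rewrite /jprod mulrDl mulrDr addrACA. Qed.

Lemma jprodBl x y z : jprod (x - y) z = jprod x z - jprod y z.
Proof. by rewrite /jprod mulrBl mulrBr opprD addrACA. Qed.

Lemma jprodZl (c : F) x z : jprod (c *: x) z = c *: jprod x z.
Proof. by rewrite /jprod -scalerAl -scalerAr scalerDr. Qed.

Lemma jprodDr x y z : jprod z (x + y) = jprod z x + jprod z y.
Proof. by rewrite !(jprodC z) jprodDl. Qed.

Lemma jprodBr x y z : jprod z (x - y) = jprod z x - jprod z y.
Proof. by rewrite !(jprodC z) jprodBl. Qed.

Lemma jprodZr (c : F) x z : jprod z (c *: x) = c *: jprod z x.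
Proof. by rewrite !(jprodC z) jprodZl. Qed.

Lemma jprodMn2l x y : jprod (x *+ 2) y = jprod x y *+ 2.
Proof. by rewrite !mulr2n jprodDl. Qed.

Lemma jprod_associator a x y :
  jprod a (jprod x y) - jprod (jprod a x) y = comm (comm a y) x.
Proof.
rewrite /jprod /comm !(mulrDl, mulrDr, mulrBl, mulrBr, mulNr, mulrN) !mulrA.
rewrite !opprD !opprK !addrA.
by rewrite [LHS](ACl (((1*5)*(4*8))*2*7*6*3)) /= !subrr !add0r.
Qed.

Lemma ZJ_jprodA a : ZJ a -> forall x y, jprod a (jprod x y) = jprod (jprod a x) y.
Proof. by move=> Za x y; apply/eqP; rewrite -subr_eq0 jprod_associator Za. Qed.

Lemma is_linD f : is_lin f -> {morph f : x y / x + y}.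
Proof. by move=> flin x y; rewrite -{1}(scale1r x) flin scale1r. Qed.

Lemma is_linMn2 f : is_lin f -> forall x, f (x *+ 2) = f x *+ 2.
Proof. by move=> flin x; rewrite !mulr2n is_linD. Qed.

Lemma is_linB f g : is_lin f -> is_lin g -> is_lin (fun z => f z - g z).
Proof.
move=> flin glin c x y; rewrite flin glin scalerBr opprD !addrA.
by rewrite [LHS](ACl (1*3*2*4)).
Qed.

Lemma JCent_jprodr {g} : JCent g -> forall x y, jprod x (g y) = g (jprod x y).
Proof. by case=> _ gC x y; rewrite jprodC -gC jprodC. Qed.

Lemma JCent_jprod1l {g} : JCent g -> forall y, jprod (g 1) y = g y *+ 2.
Proof. by case=> glin gC y; rewrite -gC jprod1l is_linMn2. Qed.

Lemma JCent_ZJ g : JCent g -> ZJ (g 1).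
Proof.
move=> gJ x y; have [_ gC] := gJ.
rewrite -jprod_associator !(JCent_jprod1l gJ) jprodMn2l -gC.
exact: subrr.
Qed.

Lemma JCent_jprod a : ZJ a -> JCent (jprod a).
Proof.
move=> Za; split=> [c x y|]; first by rewrite jprodDr jprodZr.
exact: ZJ_jprodA.
Qed.

Lemma JCentZ (c : F) g : JCent g -> JCent (fun z => c *: g z).
Proof.
case=> glin gC; split=> [c' x y|x y]; last by rewrite gC jprodZl.
by rewrite glin scalerDr !scalerA mulrC.
Qed.

Lemma JDer_sub_JCent f g h :
  is_lin f -> JCent g ->
  (forall x y, jprod (f x) y + jprod x (f y) = h (jprod x y)) ->
  (forall z, h z = f z + g z) ->
  JDer (fun z => f z - g z).
Proof.
move=> flin gJ fh hfg; have [glin gC] := gJ.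
split=> [|x y]; first exact: is_linB.
have fxy : f (jprod x y) = jprod (f x) y + jprod x (f y) - g (jprod x y).
  by rewrite fh hfg addrK.
rewrite fxy jprodBl jprodBr -gC (JCent_jprodr gJ).
by rewrite [RHS]addrACA addrA.
Qed.

Hypothesis two_neq0 : (2%:R : F) != 0.

Lemma JDer1 d : JDer d -> d 1 = 0.
Proof.
case=> dlin dJ; apply: (mulr2n_inj two_neq0); rewrite mul0rn.
have := dJ 1 1; rewrite jprod1l is_linMn2 // jprodC !jprod1l => dJ11.
by apply: (@addrI _ (d 1 *+ 2)); rewrite addr0 -dJ11.
Qed.

Lemma QJDer_companion f h :
  is_lin f -> is_lin h ->
  (forall x y, jprod (f x) y + jprod x (f y) = h (jprod x y)) ->
  forall y, h y = f y + (2%:R^-1 : F) *: jprod (f 1) y.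
Proof.
move=> flin hlin fh y; apply: (mulr2n_inj two_neq0).
rewrite -is_linMn2 // -jprod1l -fh jprod1l mulrnDl scale_half_mulr2n //.
exact: addrC.
Qed.

End JordanProduct.

Theorem lemma4p1 (F : fieldType) (A : algType F)
  (hF : (2%:R : F) != 0) (f : A -> A) (hf : QJDer f) :
  in_JCent_plus_JDer f <-> ZJ (f 1).
Proof.
have [flin [h [hlin fh]]] := hf.
split=> [[g [d [gJ [dJ fgd]]]] | Zf1].
  by rewrite fgd (JDer1 hF dJ) addr0; exact: JCent_ZJ.
pose g z := (2%:R^-1 : F) *: jprod (f 1) z.
have gJ : JCent g by apply/JCentZ/JCent_jprod.
exists g, (fun z => f z - g z); split=> //; split; last by move=> x; rewrite addrC subrK.
exact: JDer_sub_JCent fh (QJDer_companion hF flin hlin fh).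
Qed.
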